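(* Let $A\in\mathbb{C}^{2n\times 2n}$ be a normal perskew-Hermitian matrix all of whose eigenvalues have nonzero real parts. Then there exist a unitary perplectic matrix $U\in\mathbb{C}^{2n\times 2n}$ and a diagonal matrix $D\in\mathbb{C}^{n\times n}$ such that $$A=U\begin{bmatrix} D & 0\\ 0 & -F_nD^HF_n\end{bmatrix}U^H .$$
   Context: For $m\ge1$, $F_m\in\mathbb{R}^{m\times m}$ denotes the flip (exchange) matrix with ones on the antidiagonal and zeros elsewhere. A matrix $A\in\mathbb{C}^{2n\times 2n}$ is per-Hermitian if $(F_{2n}A)^H=F_{2n}A$ and perskew-Hermitian if $(F_{2n}A)^H=-F_{2n}A$. A matrix $Z\in\mathbb{C}^{2n\times 2n}$ is perplectic if $Z^HF_{2n}Z=F_{2n}$; ''unitary perplectic'' means both unitary and perplectic. *)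

(* Complex numbers: an arbitrary numClosedFieldType C
   (algebraically closed field with conjugation, real part 'Re); the
   conjugate transpose is mathcomp's  M ^t*  (spectral.v / sesquilinear.v),
   unitary/normal matrices are mathcomp's  unitarymx / normalmx. *)
From HB Require Import structures.
From mathcomp Require Import all_boot all_order all_algebra.
Set Implicit Arguments. Unset Strict Implicit. Unset Printing Implicit Defensive.
Import Order.TTheory GRing.Theory Num.Theory.
Local Open Scope ring_scope.
Local Open Scope sesquilinear_scope.

Definition flipmx (C : nzRingType) (m : nat) : 'M[C]_m :=
  \matrix_(i < m, j < m) ((i + j == m.-1)%N)%:R.

Definition perskew_hermitian (C : numClosedFieldType) (m : nat) (A : 'M[C]_m) : Prop :=
  (flipmx C m *m A) ^t* = - (flipmx C m *m A).

Definition perplecticmx (C : numClosedFieldType) (m : nat) (Z : 'M[C]_m) : Prop :=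
  Z ^t* *m flipmx C m *m Z = flipmx C m.

From HB Require Import structures.
From mathcomp Require Import all_boot all_order all_algebra.
From mathcomp Require Import fingroup perm zify.
Set Implicit Arguments.
Unset Strict Implicit.
Unset Printing Implicit Defensive.
Import Order.TTheory GRing.Theory Num.Theory.
Local Open Scope ring_scope.
Local Open Scope sesquilinear_scope.

(* Diagonalize the normal matrix unitarily, A = P^* diag(d) P.  In this basis
   the flip becomes the involution Z = P F P^*, and perskew-hermitianity reads
   conj(d_i) Z_ij = - Z_ij d_j: Z only couples eigenvalues with opposite real
   parts.  Since no real part vanishes, Z swaps the eigenvectors with Re > 0 and
   those with Re < 0, and being an involution it forces exactly n of each.  The
   n eigenvectors with Re > 0 form an isometry Y with Y^* F Y = 0, and
   U = [Y, F Y F_n] is the required unitary perplectic matrix. *)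

Section Flip.
Variable R : nzRingType.

Lemma flipmx_perm m : flipmx R m = perm_mx (perm (@rev_ord_inj m)).
Proof.
apply/matrixP => i j; rewrite !mxE permE; congr (_%:R).
by rewrite -val_eqE /=; apply/eqP/eqP; case: i j => i ? [j ?] /=; lia.
Qed.

Lemma flipmx_invol m : flipmx R m *m flipmx R m = 1%:M.
Proof.
rewrite flipmx_perm -perm_mxM -perm_mx1; congr perm_mx.
by apply/permP => i; rewrite permM !permE rev_ordK.
Qed.

Lemma flipmx_double n :
  flipmx R (n + n) = block_mx 0 (flipmx R n) (flipmx R n) 0.
Proof.
apply/matrixP => i j; rewrite !mxE.
case: splitP => i' ->; rewrite mxE; case: splitP => j' ->; rewrite !mxE /=;
  case: i' j' => [k ?] [l ?] /=;
  first [ by congr _%:R; apply/eqP/eqP; lia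
        | by rewrite (_ : _ == _ = false) //; apply/negbTE/eqP; lia ].
Qed.

End Flip.

Lemma colsub_eigenvectors (R : nzRingType) m n k (s : 'I_k -> 'I_n)
    (A : 'M[R]_m) (M : 'M[R]_(m, n)) (d : 'rV[R]_n) :
  A *m M = M *m diag_mx d -> A *m colsub s M = colsub s M *m diag_mx (colsub s d).
Proof.
by move=> AM; rewrite mulmx_colsub AM; apply/matrixP => i j; rewrite !mul_mx_diag !mxE.
Qed.

Lemma card_swapped_by_involution (R : numDomainType) m (Z : 'M[R]_m)
    (T : {set 'I_m}) :
  Z *m Z = 1%:M -> (forall i j, (i \in T) = (j \in T) -> Z i j = 0) ->
  #|T| = #|~: T|.
Proof.
move=> ZZ Z_swaps.
have card_side (X : {set 'I_m}) :
    (forall i j, (i \in X) = (j \in X) -> Z i j = 0) ->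
    #|X|%:R = \sum_(i in X) \sum_(j in ~: X) Z i j * Z j i :> R.
  move=> Z_swapsX; rewrite -sumr_const; apply: eq_bigr => i Xi.
  have <- : (Z *m Z) i i = 1 by rewrite ZZ mxE eqxx.
  rewrite mxE (bigID (mem X)) /= big1 ?add0r.
    by apply: eq_bigl => j; rewrite in_setC.
  by move=> j Xj; rewrite Z_swapsX ?mul0r // Xi Xj.
apply/eqP; rewrite -(eqr_nat R) card_side // card_side; last first.
  by move=> i j; rewrite !in_setC => /negb_inj /Z_swaps.
by rewrite setCK exchange_big; under eq_bigr do under eq_bigr do rewrite mulrC.
Qed.

Section ConjTranspose.
Variable C : numClosedFieldType.

Lemma trmxC_mul m n p (A : 'M[C]_(m, n)) (B : 'M[C]_(n, p)) :
  (A *m B) ^t* = B ^t* *m A ^t*.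
Proof. by rewrite trmx_mul map_mxM. Qed.

Lemma flipmx_trC m : (flipmx C m) ^t* = flipmx C m.
Proof. by apply/matrixP => i j; rewrite !mxE conjC_nat addnC. Qed.

Lemma perskew_hermitian_trC m (A : 'M[C]_m) :
  perskew_hermitian A -> A ^t* = - (flipmx C m *m A *m flipmx C m).
Proof.
rewrite /perskew_hermitian trmxC_mul flipmx_trC => /(congr1 (mulmx^~ (flipmx C m))).
by rewrite -[LHS]mulmxA flipmx_invol mulmx1 mulNmx => ->.
Qed.

Lemma trC_colsub_mul m n p q (s : 'I_q -> 'I_n) (t : 'I_p -> 'I_n)
    (M : 'M[C]_(m, n)) (N : 'M[C]_(m, n)) :
  (colsub s M) ^t* *m colsub t N = mxsub s t (M ^t* *m N).
Proof. by rewrite mxsub_mul trmx_mxsub map_mxsub. Qed.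

End ConjTranspose.

Section NormalMatrix.
Variables (C : numClosedFieldType) (m : nat) (A : 'M[C]_m).
Hypothesis A_normal : A \is normalmx.
Local Notation P := (spectralmx A).
Local Notation d := (spectral_diag A).

Lemma spectralmx_mulC : P *m P ^t* = 1%:M.
Proof. exact/unitarymxP/spectral_unitarymx. Qed.

Lemma spectral_decomposition : A = P ^t* *m diag_mx d *m P.
Proof. by rewrite -invmx_unitary ?spectral_unitarymx //; apply/orthomx_spectralP. Qed.

Lemma spectral_diag_eigenvalue k : eigenvalue A (d 0 k).
Proof.
have PA : P *m A = diag_mx d *m P.
  by rewrite [X in _ *m X]spectral_decomposition !mulmxA spectralmx_mulC mul1mx.
apply/eigenvalueP; exists (row k P).
  by rewrite -row_mul PA mul_diag_mx; apply/rowP => j; rewrite !mxE.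
apply: contraTneq isT => Pk0.
have : row k (P *m P ^t*) = row k 1%:M by rewrite spectralmx_mulC.
by rewrite row_mul Pk0 mul0mx => /rowP/(_ k); rewrite !mxE eqxx => /esym/eqP; rewrite oner_eq0.
Qed.

Lemma mul_spectralmx_trC : A *m P ^t* = P ^t* *m diag_mx d.
Proof. by rewrite [X in X *m _]spectral_decomposition -!mulmxA spectralmx_mulC mulmx1. Qed.

Lemma trC_mul_spectralmx_trC : A ^t* *m P ^t* = P ^t* *m diag_mx (map_mx Num.conj d).
Proof.
rewrite [X in X ^t* *m _]spectral_decomposition !trmxC_mul trmxCK tr_diag_mx map_diag_mx.
by rewrite -!mulmxA spectralmx_mulC mulmx1.
Qed.

End NormalMatrix.

Definition spectral_flip (C : numClosedFieldType) m (A : 'M[C]_m) : 'M[C]_m :=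
  spectralmx A *m flipmx C m *m (spectralmx A) ^t*.

Section NormalPerskew.
Variables (C : numClosedFieldType) (m : nat) (A : 'M[C]_m).
Hypotheses (A_normal : A \is normalmx) (A_perskew : perskew_hermitian A).
Local Notation P := (spectralmx A).
Local Notation d := (spectral_diag A).
Local Notation Z := (spectral_flip A).

Let P_unitary : P \is unitarymx := spectral_unitarymx A.

Lemma spectral_flip_invol : Z *m Z = 1%:M.
Proof.
by rewrite /spectral_flip !mulmxA mulmxKtV // -(mulmxA P) flipmx_invol mulmx1
  spectralmx_mulC.
Qed.

Lemma spectral_flip_anticommute : (diag_mx d) ^t* *m Z = - (Z *m diag_mx d).
Proof.
have PAP : P *m A *m P ^t* = diag_mx d.
  by rewrite -mulmxA mul_spectralmx_trC // mulmxA spectralmx_mulC mul1mx.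
have PAtP : P *m A ^t* *m P ^t* = (diag_mx d) ^t*.
  rewrite -mulmxA trC_mul_spectralmx_trC // mulmxA spectralmx_mulC mul1mx.
  by rewrite tr_diag_mx map_diag_mx.
rewrite -PAtP (perskew_hermitian_trC A_perskew) -PAP /spectral_flip.
rewrite mulmxN !mulNmx !mulmxA !mulmxKtV //.
by rewrite -(mulmxA (P *m _ *m A)) flipmx_invol mulmx1.
Qed.

Lemma spectral_flip_eq0 i j :
  'Re (d 0 j) != 0 -> (0 < 'Re (d 0 i)) = (0 < 'Re (d 0 j)) -> Z i j = 0.
Proof.
move=> Re_j; apply: contra_eq => Zij.
have : ((d 0 i)^* + d 0 j) * Z i j = 0.
  move/matrixP/(_ i j): spectral_flip_anticommute.
  rewrite [Z]lock tr_diag_mx map_diag_mx mul_diag_mx mul_mx_diag !mxE -lock.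
  by rewrite mulrDl mulrC => ->; rewrite mulrC addNr.
move/eqP; rewrite mulf_eq0 (negbTE Zij) orbF addr_eq0 => /eqP /(congr1 (@Re _)).
rewrite Re_conj raddfN => ->; rewrite oppr_gt0.
by case: (real_ltgt0P (Creal_Re (d 0 j))) Re_j => // ->; rewrite eqxx.
Qed.

End NormalPerskew.

Section PerplecticCompletion.
Variables (C : numClosedFieldType) (n : nat).
Local Notation F := (flipmx C (n + n)).
Local Notation Fn := (flipmx C n).

Definition perplectic_completion (Y : 'M[C]_(n + n, n)) : 'M[C]_(n + n) :=
  row_mx Y (F *m Y *m Fn).

Variable Y : 'M[C]_(n + n, n).
Local Notation U := (perplectic_completion Y).

Lemma perplectic_completion_trC : U ^t* = col_mx (Y ^t*) (Fn *m Y ^t* *m F).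
Proof. by rewrite tr_row_mx map_col_mx !trmxC_mul !flipmx_trC mulmxA. Qed.

Hypotheses (Y_isometry : Y ^t* *m Y = 1%:M) (Y_isotropic : Y ^t* *m F *m Y = 0).

Lemma perplectic_completion_unitary : U \is unitarymx.
Proof.
apply/unitarymxP/mulmx1C; rewrite perplectic_completion_trC mul_col_row.
have -> : Y ^t* *m (F *m Y *m Fn) = Y ^t* *m F *m Y *m Fn by rewrite !mulmxA.
have -> : Fn *m Y ^t* *m F *m Y = Fn *m (Y ^t* *m F *m Y) by rewrite !mulmxA.
have -> : Fn *m Y ^t* *m F *m (F *m Y *m Fn) = Fn *m (Y ^t* *m (F *m F) *m Y) *m Fn.
  by rewrite !mulmxA.
rewrite Y_isotropic flipmx_invol mulmx1 Y_isometry mulmx1 flipmx_invol mulmx0 mul0mx.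
by rewrite -scalar_mx_block.
Qed.

Lemma perplectic_completion_perplectic : perplecticmx U.
Proof.
rewrite /perplecticmx perplectic_completion_trC mul_col_mx mul_col_row.
have -> : Y ^t* *m F *m (F *m Y *m Fn) = Y ^t* *m (F *m F) *m Y *m Fn by rewrite !mulmxA.
have -> : Fn *m Y ^t* *m F *m F *m Y = Fn *m (Y ^t* *m (F *m F) *m Y) by rewrite !mulmxA.
have -> : Fn *m Y ^t* *m F *m F *m (F *m Y *m Fn) = Fn *m (Y ^t* *m F *m Y) *m Fn.
  by rewrite !mulmxA -(mulmxA _ F F) flipmx_invol mulmx1.
rewrite Y_isotropic flipmx_invol mulmx1 Y_isometry mul1mx mulmx1 mulmx0 mul0mx.
by rewrite flipmx_double.
Qed.

Lemma perskew_mul_perplectic_completion (A : 'M[C]_(n + n)) (D : 'M[C]_n) :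
    perskew_hermitian A -> A *m Y = Y *m D -> A ^t* *m Y = Y *m D ^t* ->
  A *m U = U *m block_mx D 0 0 (- (Fn *m D ^t* *m Fn)).
Proof.
move=> /perskew_hermitian_trC A_trC AY AtY.
have AF : A *m F = - (F *m A ^t*).
  by rewrite A_trC mulmxN !mulmxA flipmx_invol mul1mx opprK.
rewrite mul_mx_row mul_row_block !mulmx0 addr0 add0r mulmxN AY !mulmxA AF.
by rewrite !mulNmx -(mulmxA F (A ^t*)) AtY !mulmxA -(mulmxA _ Fn Fn) flipmx_invol mulmx1.
Qed.

End PerplecticCompletion.

Lemma isotropic_eigenbasis (C : numClosedFieldType) n (A : 'M[C]_(n + n)) :
    A \is normalmx -> perskew_hermitian A ->
    (forall a, eigenvalue A a -> 'Re a != 0) ->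
  exists (Y : 'M[C]_(n + n, n)) (D : 'M[C]_n),
    [/\ Y ^t* *m Y = 1%:M, Y ^t* *m flipmx C (n + n) *m Y = 0, is_diag_mx D,
        A *m Y = Y *m D & A ^t* *m Y = Y *m D ^t*].
Proof.
move=> A_normal A_perskew Re_eig.
set P := spectralmx A; set d := spectral_diag A.
pose S := [set k | 0 < 'Re (d 0 k)].
have flip_swaps i j : (i \in S) = (j \in S) -> spectral_flip A i j = 0.
  by rewrite !inE; apply/spectral_flip_eq0/Re_eig/spectral_diag_eigenvalue.
have cardS : #|S| = n.
  have := card_swapped_by_involution (spectral_flip_invol A) flip_swaps.
  by have := cardsC S; rewrite card_ord; move: #|~: S| #|S| => b a; lia.
pose s (k : 'I_n) := enum_val (cast_ord (esym cardS) k).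
have s_inj : injective s by move=> k l /enum_val_inj /cast_ord_inj.
have sS k : s k \in S := enum_valP _.
exists (colsub s (P ^t*)), (diag_mx (colsub s d)); split.
- rewrite trC_colsub_mul trmxCK spectralmx_mulC; apply/matrixP => k l.
  by rewrite !mxE (inj_eq s_inj).
- rewrite -mulmxA mulmx_colsub trC_colsub_mul trmxCK mulmxA -/(spectral_flip A).
  by apply/matrixP => k l; rewrite mxE [RHS]mxE flip_swaps ?sS.
- exact: diag_mx_is_diag.
- exact/colsub_eigenvectors/mul_spectralmx_trC.
- rewrite tr_diag_mx map_diag_mx map_mxsub.
  exact/colsub_eigenvectors/trC_mul_spectralmx_trC.
Qed.

Theorem lemma2p6 (C : numClosedFieldType) (n : nat) (A : 'M[C]_(n + n))
  (hnorm : A \is normalmx) (hpsk : perskew_hermitian A)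
  (heig : forall a : C, eigenvalue A a -> 'Re a != 0) :
  exists (U : 'M[C]_(n + n)) (D : 'M[C]_n),
    [/\ U \is unitarymx, perplecticmx U, is_diag_mx D &
        A = U *m block_mx D 0 0 (- (flipmx C n *m D ^t* *m flipmx C n)) *m U ^t*].
Proof.
have [Y [D [Y_isometry Y_isotropic D_diag AY AtY]]] :=
  isotropic_eigenbasis hnorm hpsk heig.
have U_unitary := perplectic_completion_unitary Y_isometry Y_isotropic.
exists (perplectic_completion Y), D; split => //.
- exact: perplectic_completion_perplectic.
- by rewrite -(perskew_mul_perplectic_completion hpsk AY AtY) mulmxtVK.
Qed.
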